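(* Let $\lambda=2\cos(\pi/5)$ and let $H_5$ be the subgroup of $SL(2,\mathbb R)$ generated by $S=\begin{pmatrix}0&1\\-1&0\end{pmatrix}$ and $T=\begin{pmatrix}1&\lambda\\0&1\end{pmatrix}$. Let $p$ be an odd rational prime and set $a=2\lambda^2$, $c=p\lambda^3$. Then for every $m\in\mathbb Z$, $$\begin{pmatrix}1-acm\lambda & a^2m\lambda\\ -c^2m\lambda & 1+acm\lambda\end{pmatrix}\in H(m).$$
   Context: For $m\in\mathbb Z$, $H(m)=\{(a_{ij})\in H_5 : a_{11}-1,\ a_{22}-1,\ a_{12},\ a_{21}\in m\mathbb Z[\lambda]\}$. *)

From HB Require Import structures.
From mathcomp Require Import all_boot all_order all_algebra.
From mathcomp Require Import reals trigo.
Set Implicit Arguments. Unset Strict Implicit. Unset Printing Implicit Defensive.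
Import Order.TTheory GRing.Theory Num.Theory.
Local Open Scope ring_scope.

Definition mx2 (R : nzRingType) (a b c d : R) : 'M[R]_2 :=
  \matrix_(i < 2, j < 2)
    if i == 0 :> nat then (if j == 0 :> nat then a else b)
    else (if j == 0 :> nat then c else d).

Section Hecke.
Variable R : realType.

Definition lam : R := 2 * cos (pi / 5).

Definition Smx : 'M[R]_2 := mx2 0 1 (-1) 0.
Definition Tmx : 'M[R]_2 := mx2 1 lam 0 1.

Inductive H5 : 'M[R]_2 -> Prop :=
| H5_one : H5 1%:M
| H5_S A : H5 A -> H5 (Smx *m A)
| H5_Sinv A : H5 A -> H5 (invmx Smx *m A)
| H5_T A : H5 A -> H5 (Tmx *m A)
| H5_Tinv A : H5 A -> H5 (invmx Tmx *m A).

(* Z[lambda] = { u + v lambda | u, v in Z }  (lambda^2 = lambda + 1) *)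
Definition Zlam (x : R) : Prop :=
  exists u v : int, x = u%:~R + v%:~R * lam.

Definition in_mZlam (m : int) (x : R) : Prop :=
  exists y, Zlam y /\ x = m%:~R * y.

Definition Hm (m : int) (A : 'M[R]_2) : Prop :=
  H5 A /\ in_mZlam m (A 0 0 - 1) /\ in_mZlam m (A 1 1 - 1)
       /\ in_mZlam m (A 0 1) /\ in_mZlam m (A 1 0).

End Hecke.

From HB Require Import structures.
From mathcomp Require Import all_boot all_order all_algebra.
From mathcomp Require Import reals trigo.
From mathcomp Require Import ring lra.
Import Order.TTheory GRing.Theory Num.Theory.
Local Open Scope ring_scope.

(* The matrix is g T^m g^-1 for any g in H_5 with first column (a, c) and
   determinant 1, since then g T^m g^-1 = 1 + m lambda (a, c)^T (-c, a).
   Such a g exists: the steps (x, y) |-> (n lambda x - y, x), i.e. the action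
   of T^n S^-1 on first columns, carry (1, 0) with n = -1, -1, 1, 1, -(p-1)/2, 0
   to -(a, c), using lambda^2 = lambda + 1.  The congruence conditions then
   only say that a and c lie in the ring Z[lambda]. *)

Section Mx2.
Context {R : comUnitRingType}.
Implicit Types a b c d e f g h t : R.

Lemma mulmx_mx2 a b c d e f g h :
  mx2 a b c d *m mx2 e f g h =
  mx2 (a * e + b * g) (a * f + b * h) (c * e + d * g) (c * f + d * h).
Proof.
apply/matrixP => i j; rewrite !mxE !big_ord_recr big_ord0 /= add0r !mxE.
by case: i => [[|[|//]] ?]; case: j => [[|[|//]] ?].
Qed.

Lemma mx2_1 : 1%:M = mx2 1 0 0 1 :> 'M[R]_2.
Proof.
apply/matrixP => i j; rewrite !mxE.
by case: i => [[|[|//]] ?]; case: j => [[|[|//]] ?].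
Qed.

Lemma invmx_eq n (A B : 'M[R]_n.+1) : B *m A = 1%:M -> invmx A = B.
Proof.
move=> /mulmx1C AB1; have [uA _] := mulmx1_unit AB1.
by rewrite -(mulKmx uA B) AB1 mulmx1.
Qed.

Lemma invmx_mx2 a b c d :
  a * d - b * c = 1 -> invmx (mx2 a b c d) = mx2 d (- b) (- c) a.
Proof.
move=> det1; apply: invmx_eq; rewrite mulmx_mx2 mx2_1.
by congr mx2; try rewrite -[in RHS]det1; ring.
Qed.

Lemma unitmx_mx2 a b c d : a * d - b * c = 1 -> mx2 a b c d \in unitmx.
Proof.
move=> det1; apply: (proj1 (mulmx1_unit (_ : _ *m mx2 d (- b) (- c) a = _))).
by rewrite mulmx_mx2 mx2_1; congr mx2; try rewrite -[in RHS]det1; ring.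
Qed.

Lemma conj_mx2_parabolic {a b c d} t : a * d - b * c = 1 ->
  mx2 a b c d *m mx2 1 t 0 1 *m invmx (mx2 a b c d) =
  mx2 (1 - a * c * t) (a ^+ 2 * t) (- (c ^+ 2 * t)) (1 + a * c * t).
Proof.
move=> det1; rewrite invmx_mx2 // !mulmx_mx2.
by congr mx2; try rewrite -[in RHS]det1; ring.
Qed.

End Mx2.

Section Hecke5.
Context {R : realType}.
Local Notation l := (lam R).

Lemma lam_sqr : l ^+ 2 = l + 1.
Proof.
rewrite /lam; set t := pi / 5 : R; set c := cos t.
have c_gt0 : 0 < c.
  by apply: cos_gt0_pihalf; have := pi_gt0 R; rewrite /t => ?; apply/andP; lra.
have cos3t : cos (t *+ 3) = 4 * c ^+ 3 - 3 * c.
  rewrite mulrS addrC cosD cos_mulr2n sin_mulr2n -/c.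
  by have := sin2cos2 t; rewrite -/c; nra.
have cos3t' : cos (t *+ 3) = 1 - 2 * c ^+ 2.
  have -> : t *+ 3 = - (t *+ 2 - pi) by rewrite /t; field.
  by rewrite cosN cosB cospi sinpi cos_mulr2n -/c; ring.
have : (c + 1) * (4 * c ^+ 2 - 2 * c - 1) = 0.
  by move: cos3t'; rewrite cos3t; lra.
by move/eqP; rewrite mulf_eq0 => /orP[] /eqP; lra.
Qed.

Lemma Zlam_int (n : int) : Zlam (n%:~R : R).
Proof. by exists n, 0; rewrite mul0r addr0. Qed.

Lemma Zlam_lam : Zlam l.
Proof. by exists 0, 1; rewrite mul1r add0r. Qed.

Lemma Zlam_opp {x : R} : Zlam x -> Zlam (- x).
Proof. by move=> [u [v ->]]; exists (- u), (- v); rewrite !mulrNz; ring. Qed.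

Lemma Zlam_mul {x y : R} : Zlam x -> Zlam y -> Zlam (x * y).
Proof.
move=> [u [v ->]] [u' [v' ->]].
exists (u * u' + v * v'), (u * v' + v * u' + v * v').
apply/eqP; rewrite -subr_eq0 !(intrD, intrM); apply/eqP.
by transitivity (v%:~R * v'%:~R * (l ^+ 2 - l - 1)); [ring | rewrite lam_sqr; ring].
Qed.

Lemma Zlam_exp {x : R} n : Zlam x -> Zlam (x ^+ n).
Proof.
move=> Zx; elim: n => [|n IHn]; first exact: (Zlam_int 1).
by rewrite exprS; apply: Zlam_mul.
Qed.

Lemma in_mZlam_mul (m : int) {x : R} : Zlam x -> in_mZlam m (m%:~R * x).
Proof. by exists x. Qed.

Lemma H5_mul {A B : 'M[R]_2} : H5 A -> H5 B -> H5 (A *m B).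
Proof.
move=> hA hB; elim: hA => [|A' _ IH|A' _ IH|A' _ IH|A' _ IH].
- by rewrite mul1mx.
- by rewrite -mulmxA; apply: H5_S.
- by rewrite -mulmxA; apply: H5_Sinv.
- by rewrite -mulmxA; apply: H5_T.
- by rewrite -mulmxA; apply: H5_Tinv.
Qed.

Lemma unitmx_Smx : Smx R \in unitmx.
Proof. by apply: unitmx_mx2; ring. Qed.

Lemma unitmx_Tmx : Tmx R \in unitmx.
Proof. by apply: unitmx_mx2; ring. Qed.

Lemma invmx_Smx : invmx (Smx R) = mx2 0 (-1) 1 0.
Proof. by rewrite invmx_mx2 ?oppr0 ?opprK //; ring. Qed.

Lemma H5_linv {A : 'M[R]_2} : H5 A -> exists2 B, H5 B & B *m A = 1%:M.
Proof.
have step (X Y A' B : 'M[R]_2) : H5 Y -> Y *m X = 1%:M ->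
    H5 B -> B *m A' = 1%:M -> exists2 C, H5 C & C *m (X *m A') = 1%:M.
  move=> hY YX hB BA; exists (B *m Y); first exact: H5_mul hB hY.
  by rewrite -mulmxA (mulmxA Y) YX mul1mx.
have gen (X : 'M[R]_2) : H5 X = H5 (X *m 1%:M) by rewrite mulmx1.
elim=> [|A' _ [B hB BA]|A' _ [B hB BA]|A' _ [B hB BA]|A' _ [B hB BA]].
- by exists 1%:M; [exact: H5_one | rewrite mul1mx].
- by apply: step hB BA; [rewrite gen; apply/H5_Sinv/H5_one | exact: mulVmx unitmx_Smx].
- by apply: step hB BA; [rewrite gen; apply/H5_S/H5_one | exact: mulmxV unitmx_Smx].
- by apply: step hB BA; [rewrite gen; apply/H5_Tinv/H5_one | exact: mulVmx unitmx_Tmx].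
- by apply: step hB BA; [rewrite gen; apply/H5_T/H5_one | exact: mulmxV unitmx_Tmx].
Qed.

Lemma H5_inv {A : 'M[R]_2} : H5 A -> H5 (invmx A).
Proof. by move=> /H5_linv[B hB /invmx_eq ->]. Qed.

Lemma H5_Tpow (n : int) : H5 (mx2 1 (n%:~R * l) 0 1).
Proof.
have Tnat k : H5 (mx2 1 (k%:R * l) 0 1).
  elim: k => [|k IHk]; first by rewrite mul0r -mx2_1; exact: H5_one.
  suff -> : mx2 1 (k.+1%:R * l) 0 1 = Tmx R *m mx2 1 (k%:R * l) 0 1.
    exact: H5_T.
  by rewrite /Tmx mulmx_mx2; congr mx2; rewrite ?natrS; ring.
case: n => k; first exact: Tnat.
rewrite NegzE mulrNz mulNr -[0]oppr0 -invmx_mx2; last by ring.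
exact/H5_inv/Tnat.
Qed.

(* The determinant condition is part of the definition so that the inverse of
   [mx2 x b y d] can be written down without computing determinants. *)
Definition H5_col (x y : R) : Prop :=
  exists b d, x * d - b * y = 1 /\ H5 (mx2 x b y d).

Lemma H5_col_e1 : H5_col 1 0.
Proof. by exists 0, 1; split; [ring | rewrite -mx2_1; exact: H5_one]. Qed.

Lemma H5_col_step (n : int) (x y z : R) :
  z = n%:~R * l * x - y -> H5_col x y -> H5_col z x.
Proof.
move=> -> [b [d [det1 hg]]]; exists (n%:~R * l * b - d), b.
split; first by rewrite -det1; ring.
suff -> : mx2 (n%:~R * l * x - y) (n%:~R * l * b - d) x b =
          mx2 1 (n%:~R * l) 0 1 *m (invmx (Smx R) *m mx2 x b y d).
  exact/H5_mul/H5_Sinv/hg/H5_Tpow.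
by rewrite invmx_Smx !mulmx_mx2; congr mx2; ring.
Qed.

Lemma H5_col_opp {x y : R} : H5_col x y -> H5_col (- x) (- y).
Proof.
move=> h; apply: (@H5_col_step 0 (- y) x); first by ring.
by apply: (@H5_col_step 0 x y) h; ring.
Qed.

Lemma H5_col_odd {p : nat} : odd p -> H5_col (2 * l ^+ 2) (p%:R * l ^+ 3).
Proof.
move=> p_odd; have hl := lam_sqr.
have p_half : p%:R = 1 + 2 * (p./2)%:R :> R.
  by rewrite -{1}(odd_double_half p) p_odd natrD -mul2n natrM.
have h1 : H5_col (- l) 1 by apply: (H5_col_step (-1)) H5_col_e1; ring.
have h2 : H5_col l (- l) by apply: (H5_col_step (-1)) h1; nra.
have h3 : H5_col (l ^+ 3) l by apply: (H5_col_step 1) h2; nra.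
have h4 : H5_col (2 * l ^+ 2) (l ^+ 3) by apply: (H5_col_step 1) h3; nra.
have h5 : H5_col (- (p%:R * l ^+ 3)) (2 * l ^+ 2).
  by apply: (H5_col_step (- (p./2)%:Z)) h4; rewrite p_half; ring.
rewrite -[2 * _]opprK -[p%:R * _]opprK; apply: H5_col_opp.
by apply: (H5_col_step 0) h5; ring.
Qed.

End Hecke5.

Theorem lemma3p3 (R : realType) (p : nat) (m : int) :
  prime p -> odd p ->
  let l := lam R in
  let a := 2 * l ^+ 2 in
  let c := p%:R * l ^+ 3 in
  Hm m (mx2 (1 - a * c * m%:~R * l) (a ^+ 2 * m%:~R * l)
            (- (c ^+ 2 * m%:~R * l)) (1 + a * c * m%:~R * l)).
Proof.
move=> _ p_odd l a c.
have [b [d [det1 g_in]]] := H5_col_odd (R := R) p_odd.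
have Zl : Zlam l := Zlam_lam.
have Za : Zlam a := Zlam_mul (Zlam_int 2) (Zlam_exp 2 Zl).
have Zc : Zlam c := Zlam_mul (Zlam_int p) (Zlam_exp 3 Zl).
split.
  rewrite -!(mulrA _ m%:~R l) /a /c -(conj_mx2_parabolic _ det1).
  exact: H5_mul (H5_mul g_in (H5_Tpow m)) (H5_inv g_in).
rewrite /mx2 !mxE /=; split; [|split; [|split]].
- have -> : 1 - a * c * m%:~R * l - 1 = m%:~R * - (a * c * l) by ring.
  exact: in_mZlam_mul (Zlam_opp (Zlam_mul (Zlam_mul Za Zc) Zl)).
- have -> : 1 + a * c * m%:~R * l - 1 = m%:~R * (a * c * l) by ring.
  exact: in_mZlam_mul (Zlam_mul (Zlam_mul Za Zc) Zl).
- have -> : a ^+ 2 * m%:~R * l = m%:~R * (a ^+ 2 * l) by ring.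
  exact: in_mZlam_mul (Zlam_mul (Zlam_exp 2 Za) Zl).
- have -> : - (c ^+ 2 * m%:~R * l) = m%:~R * - (c ^+ 2 * l) by ring.
  exact: in_mZlam_mul (Zlam_opp (Zlam_mul (Zlam_exp 2 Zc) Zl)).
Qed.
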